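(* There is a family of finite labeled prime event structures $(\mathcal{E}_n)_{n\ge1}$ with event sets $E_n$ such that $|E_n|=n+1$, $|\mathcal{L}(\mathcal{E}_n)|=n!$, and the automaton encoding $\mathcal{A}^{\mathcal{E}_n}$ has exactly $|Q^{\mathcal{E}_n}|=2^n+1$ states. Moreover, every nondeterministic finite automaton $\mathcal{A}$ with $\mathcal{L}(\mathcal{A})=\mathcal{L}(\mathcal{E}_n)$ has at least $2^n$ states.
   Context: A finite $\mathcal{X}$-labeled prime event structure is $\mathcal{E}=\langle E,<,\#,h\rangle$ with finite $E$, strict partial order $<$, labeling $h:E\to\mathcal{X}$, and a symmetric irreflexive conflict relation $\#$ closed under $<$ (if $e\#e'$ and $e'<e''$ then $e\#e''$); $\mathcal{X}$ contains $\varepsilon$ denoting the empty word; there is an event $\bot$ with nothing below it, $\bot<e$ for all other $e$, $h(\bot)=\varepsilon$. A configuration is a left-closed, conflict-free subset of $E$; maximal if no configuration strictly contains it. A trace of a configuration $C$ lists every event of $C$ exactly once respecting $<$; $\mathcal{L}(\mathcal{E})$ is the set of words $h(t)$ (pointwise labels, $\varepsilon$ omitted) for traces $t$ of maximal configurations. The automaton encoding of $\mathcal{E}$ is the NFA $\mathcal{A}^{\mathcal{E}}=\langle Q^{\mathcal{E}},\mathcal{X},\delta^{\mathcal{E}},q_0,F\rangle$ with $Q^{\mathcal{E}}=\{q_C\mid C$ a configuration of $\mathcal{E}\}$, $(q_{C_1},\sigma,q_{C_2})\in\delta^{\mathcal{E}}$ iff there is $e\in E$ with $C_1\cup\{e\}=C_2$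 and $h(e)=\sigma$ (transitions labeled $\varepsilon$ are $\varepsilon$-moves), initial state $q_{\{\bot\}}$, and accepting states $F=\{q_C\mid C$ maximal$\}$. *)

From mathcomp Require Import all_boot.
Set Implicit Arguments. Unset Strict Implicit. Unset Printing Implicit Defensive.

(* The label alphabet X is  option Sigma : [None] plays the role of epsilon. *)

Record pes (Sigma : finType) := Pes {
  ev : finType;
  evlt : rel ev;
  evcf : rel ev;
  lab : ev -> option Sigma;
  evbot : ev;
  evlt_irr : forall e, ~~ evlt e e;
  evlt_trans : forall e1 e2 e3, evlt e1 e2 -> evlt e2 e3 -> evlt e1 e3;
  evcf_sym : forall e e', evcf e e' = evcf e' e;
  evcf_irr : forall e, ~~ evcf e e;
  evcf_inherit : forall e e' e'', evcf e e' -> evlt e' e'' -> evcf e e'';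
  evbot_min : forall e, ~~ evlt e evbot;
  evbot_below : forall e, e != evbot -> evlt evbot e;
  lab_bot : lab evbot = None
}.

Section PES.
Variables (Sigma : finType) (P : pes Sigma).

Definition is_config (C : {set ev P}) : bool :=
  [forall e, forall e', ((e' \in C) && evlt e e') ==> (e \in C)] &&
  [forall e, forall e', ((e \in C) && (e' \in C)) ==> ~~ evcf e e'].

Definition is_max_config (C : {set ev P}) : bool :=
  is_config C && [forall D : {set ev P}, (is_config D && (C \subset D)) ==> (D == C)].

Definition is_trace (C : {set ev P}) (t : seq (ev P)) : Prop :=
  uniq t /\ (forall e, (e \in t) = (e \in C)) /\
  (forall i j, i < j -> j < size t -> ~~ evlt (nth (evbot P) t j) (nth (evbot P) t i)).

Definition trace_word (t : seq (ev P)) : seq Sigma := pmap (@lab _ P) t.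

Definition pes_lang (w : seq Sigma) : Prop :=
  exists C t, is_max_config C /\ is_trace C t /\ w = trace_word t.

Definition enc_Q : finType := {C : {set ev P} | is_config C}.

Lemma config_bot : is_config [set evbot P].
Proof.
apply/andP; split; apply/forallP=> e; apply/forallP=> e'.
- apply/implyP=> /andP[]; rewrite in_set1 => /eqP-> Hlt.
  by move: (evbot_min e); rewrite Hlt.
- apply/implyP=> /andP[]; rewrite !in_set1 => /eqP-> /eqP->; exact: evcf_irr.
Qed.

Definition enc_q0 : enc_Q := exist _ [set evbot P] config_bot.

Definition enc_delta (C1 : enc_Q) (a : option Sigma) (C2 : enc_Q) : bool :=
  [exists e, (e \notin val C1) && (val C2 == e |: val C1) && (lab e == a)].

Definition enc_F (C : enc_Q) : bool := is_max_config (val C).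

End PES.

Record nfa (Sigma : finType) := Nfa {
  nfa_Q : finType;
  nfa_delta : nfa_Q -> option Sigma -> nfa_Q -> bool;
  nfa_q0 : nfa_Q;
  nfa_F : pred nfa_Q
}.

Definition nfa_lang (Sigma : finType) (A : nfa Sigma) (w : seq Sigma) : Prop :=
  exists s : seq (option Sigma * nfa_Q A),
    path (fun p q => nfa_delta p.2 q.1 q.2) (None, @nfa_q0 _ A) s /\
    @nfa_F _ A (last (@nfa_q0 _ A) (map snd s)) /\
    w = pmap fst s.

Definition enc_nfa (Sigma : finType) (P : pes Sigma) : nfa Sigma :=
  @Nfa Sigma (enc_Q P) (@enc_delta _ P) (enc_q0 P) (@enc_F _ P).

Definition has_card (T : eqType) (L : T -> Prop) (k : nat) : Prop :=
  exists s : seq T, uniq s /\ size s = k /\ (forall w, L w <-> w \in s).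

(* The event structure takes a bottom event and, above it, one event per letter
   of the alphabet T, with no conflicts at all.  Its configurations are the empty
   set and the sets containing bottom, i.e. 2 ^ #|T| + 1 of them; the only maximal
   one is the whole event set, so its language is the set of permutations of T.
   For the lower bound, the pairs (enum S, enum (~: S)), S : {set T}, form a
   fooling set: enum S ++ enum (~: S') is a permutation of T only if S \subset S',
   so an automaton cannot pass through the same state after reading enum S and
   enum S' for S <> S'. *)

From mathcomp Require Import all_boot.
Set Implicit Arguments. Unset Strict Implicit. Unset Printing Implicit Defensive.

Section FinSets.
Variable T : finType.

Lemma card_set : #|{set T}| = 2 ^ #|T|.
Proof. by have := card_powerset [set: T]; rewrite powersetT !cardsT. Qed.

Lemma perm_enum_setC (S : {set T}) : perm_eq (enum S ++ enum (~: S)) (enum T).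
Proof.
apply: uniq_perm; last by move=> a; rewrite mem_cat !mem_enum inE orbN.
- by rewrite cat_uniq !enum_uniq andbT; apply/hasPn => a; rewrite !mem_enum inE.
- exact: enum_uniq.
Qed.

Lemma uniq_enum_setC_subset (S S' : {set T}) :
  uniq (enum S ++ enum (~: S')) -> S \subset S'.
Proof.
rewrite cat_uniq => /and3P[_ /hasPn disj _]; apply/subsetP => a aS.
apply/negPn/negP => aS'.
by have := disj a; rewrite !mem_enum inE aS' aS => /(_ isT).
Qed.

End FinSets.

Lemma pmap_eq_cat (A B : Type) (f : A -> option B) (s : seq A) (u v : seq B) :
  pmap f s = u ++ v ->
  exists s1 s2, [/\ s = s1 ++ s2, pmap f s1 = u & pmap f s2 = v].
Proof.
elim: s u => [|a s IHs] u /=; first by case: u => //= <-; exists [::], [::].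
case Efa: (f a) => [b|]; last first.
  by case/IHs=> s1 [s2 [-> <- <-]]; exists (a :: s1), s2; rewrite /= Efa.
case: u => [|c u] /= => [<-|[<- /IHs[s1 [s2 [-> <- <-]]]]].
  by exists [::], (a :: s); rewrite /= Efa.
by exists (a :: s1), s2; rewrite /= Efa.
Qed.

Section NfaRuns.
Variables (Sigma : finType) (A : nfa Sigma).

Definition nfa_step (p q : option Sigma * nfa_Q A) : bool := nfa_delta p.2 q.1 q.2.

Definition nfa_reads (p : nfa_Q A) (w : seq Sigma) (q : nfa_Q A) : Prop :=
  exists s, [/\ path nfa_step (None, p) s, last p (map snd s) = q & w = pmap fst s].

Lemma nfa_langP w :
  nfa_lang A w <-> exists2 q, nfa_reads (nfa_q0 A) w q & nfa_F q.
Proof.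
split=> [[s [Hs [F_s ->]]] | [q [s [Hs <- ->]] F_s]]; last by exists s.
by exists (last (nfa_q0 A) (map snd s)); first exists s.
Qed.

Lemma path_nfa_step x s : path nfa_step x s = path nfa_step (None, x.2) s.
Proof. by case: s. Qed.

Lemma last_nfa_state p (s : seq (option Sigma * nfa_Q A)) :
  last p (map snd s) = (last (None, p) s).2.
Proof. exact: (last_map snd s (None, p)). Qed.

Lemma nfa_reads_cat p u v r :
  nfa_reads p (u ++ v) r <-> exists2 q, nfa_reads p u q & nfa_reads q v r.
Proof.
split=> [[s [Hs <- /esym/pmap_eq_cat[s1 [s2 [Es <- <-]]]]] |].
  move: Hs; rewrite {}Es cat_path => /andP[H1 H2].
  exists (last p (map snd s1)); first by exists s1.
  exists s2; split=> //; last by rewrite map_cat last_cat.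
  by rewrite last_nfa_state -path_nfa_step.
case=> q [s1 [H1 <- ->]] [s2 [H2 <- ->]]; exists (s1 ++ s2); split.
- by rewrite cat_path H1 /= path_nfa_step -last_nfa_state.
- by rewrite map_cat last_cat.
- by rewrite pmap_cat.
Qed.

Lemma nfa_fooling_set (I : finType) (x y : I -> seq Sigma) :
  (forall i, nfa_lang A (x i ++ y i)) ->
  (forall i j, nfa_lang A (x i ++ y j) -> nfa_lang A (x j ++ y i) -> i = j) ->
  #|I| <= #|nfa_Q A|.
Proof.
move=> accept fool.
have midpoint i : exists q, nfa_reads (nfa_q0 A) (x i) q /\
                            exists2 r, nfa_reads q (y i) r & nfa_F r.
  have /nfa_langP[r /nfa_reads_cat[q xi yi] Fr] := accept i.
  by exists q; split; last exists r.
have [mid Hmid] := fin_all_exists midpoint.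
suff mid_inj : injective mid by exact: leq_card mid_inj.
move=> i j Eij; have [xi [r yi Fr]] := Hmid i; have [xj [r' yj Fr']] := Hmid j.
apply: fool; apply/nfa_langP.
- exists r'; last exact: Fr'.
  by apply/nfa_reads_cat; exists (mid i); last rewrite Eij.
- exists r; last exact: Fr.
  by apply/nfa_reads_cat; exists (mid j); last rewrite -Eij.
Qed.

End NfaRuns.

Section ConcurrentPes.
Variable T : finType.

Definition concurrent_lt (x y : option T) : bool := (x == None) && (y != None).

Lemma concurrent_lt_irr x : ~~ concurrent_lt x x.
Proof. by case: x. Qed.

Lemma concurrent_lt_trans x y z :
  concurrent_lt x y -> concurrent_lt y z -> concurrent_lt x z.
Proof. by rewrite /concurrent_lt => /andP[_ /negbTE ->]. Qed.

Lemma concurrent_lt_bot x : ~~ concurrent_lt x None.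
Proof. by rewrite /concurrent_lt andbF. Qed.

Lemma concurrent_bot_lt x : x != None -> concurrent_lt None x.
Proof. by rewrite /concurrent_lt eqxx. Qed.

Definition concurrent_pes : pes T :=
  @Pes T (option T) concurrent_lt (fun _ _ => false) id None
    concurrent_lt_irr concurrent_lt_trans (fun _ _ => erefl) (fun _ => isT)
    (fun _ _ _ cf _ => cf) concurrent_lt_bot concurrent_bot_lt erefl.

Local Notation P := concurrent_pes.

Lemma concurrent_configE (C : {set option T}) :
  @is_config _ P C = (C == set0) || (None \in C).
Proof.
apply/idP/idP.
- case/andP=> /forallP closed _.
  have [->|[[a|] aC]] := set_0Vmem C; rewrite ?eqxx ?aC ?orbT //.
  by rewrite (implyP (forallP (closed None) (Some a))) ?orbT // aC.
case/orP=> [/eqP->|botC]; apply/andP; split; apply/forallP=> x; apply/forallP=> y;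
  apply/implyP => //.
- by rewrite in_set0.
- by case/andP=> _ /andP[/eqP-> _].
Qed.

Lemma concurrent_max_configE (C : {set option T}) :
  @is_max_config _ P C = (C == setT).
Proof.
apply/idP/idP.
- case/andP=> _ /forallP/(_ setT).
  by rewrite concurrent_configE inE orbT subsetT eq_sym.
move/eqP->; rewrite /is_max_config concurrent_configE inE orbT /=.
by apply/forallP=> D; apply/implyP=> /andP[_ sTD]; rewrite eqEsubset sTD subsetT.
Qed.

Lemma concurrent_langP w : pes_lang P w <-> perm_eq w (enum T).
Proof.
split=> [[C [t [maxC [[uniq_t [mem_t _]] ->]]]] | perm_w].
  move: maxC mem_t; rewrite concurrent_max_configE => /eqP-> mem_t.
  apply: uniq_perm => [||a].
  - by apply: (pmap_uniq (g := Some)) => // -[].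
  - exact: enum_uniq.
  - by rewrite /trace_word mem_pmap map_id mem_t inE mem_enum.
exists setT, (None :: map Some w); rewrite concurrent_max_configE.
split=> //; split; last by rewrite /trace_word /= map_pK.
split.
  rewrite /= (map_inj_uniq Some_inj) (perm_uniq perm_w) enum_uniq andbT.
  by apply/negP => /mapP[].
split=> [[a|] | i [|j] // _ lt_j]; rewrite ?inE //.
  by rewrite (mem_map Some_inj) (perm_mem perm_w) mem_enum.
by rewrite /=; have /mapP[a _ ->] := @mem_nth _ None (map Some w) j lt_j.
Qed.

Lemma concurrent_lang_card : has_card (pes_lang P) #|T|`!.
Proof.
exists (permutations (enum T)); split; first exact: permutations_uniq.
split; first by rewrite size_permutations ?enum_uniq // -cardE.
by move=> w; rewrite mem_permutations; exact: concurrent_langP.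
Qed.

Definition with_bot (S : {set T}) : {set option T} := None |: Some @: S.

Lemma with_bot_inj : injective with_bot.
Proof.
move=> S S' eqSS'; apply/setP => a.
have : (Some a \in with_bot S) = (Some a \in with_bot S') by rewrite eqSS'.
by rewrite !in_setU1 /= !(mem_imset _ _ Some_inj).
Qed.

Lemma concurrent_configsE :
  [pred C | @is_config _ P C] =i set0 |: [set with_bot S | S : {set T}].
Proof.
move=> C; rewrite !inE concurrent_configE; congr (_ || _).
apply/idP/imsetP => [botC | [S _ ->]]; last by rewrite in_setU1 eqxx.
exists [set a | Some a \in C] => //; apply/setP => -[a|].
- by rewrite in_setU1 /= (mem_imset _ _ Some_inj) inE.
- by rewrite in_setU1 eqxx botC.
Qed.

Lemma card_concurrent_states : #|enc_Q P| = 2 ^ #|T| + 1.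
Proof.
rewrite card_sig (eq_card concurrent_configsE) cardsU1.
rewrite card_imset ?cardsT ?card_set; last exact: with_bot_inj.
suff -> : set0 \notin [set with_bot S | S : {set T}] by rewrite addnC.
by apply/imsetP => -[S _ /setP/(_ None)]; rewrite in_setU1 eqxx inE.
Qed.

Lemma concurrent_nfa_card (A : nfa T) :
  (forall w, nfa_lang A w <-> pes_lang P w) -> 2 ^ #|T| <= #|nfa_Q A|.
Proof.
move=> langA; rewrite -card_set.
apply: (nfa_fooling_set (x := fun S : {set T} => enum S)
                        (y := fun S => enum (~: S))).
  by move=> S; apply/langA/concurrent_langP; exact: perm_enum_setC.
have crossing_sub (S S' : {set T}) :
    nfa_lang A (enum S ++ enum (~: S')) -> S \subset S'.
  move/langA/concurrent_langP => perm_SS'; apply: uniq_enum_setC_subset.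
  by rewrite (perm_uniq perm_SS') enum_uniq.
move=> S S' /crossing_sub sSS' /crossing_sub sS'S.
by apply/eqP; rewrite eqEsubset sSS'.
Qed.

End ConcurrentPes.

Theorem theorem5 :
  forall n : nat, 1 <= n ->
  exists (Sigma : finType) (P : pes Sigma),
    #|ev P| = n.+1 /\
    has_card (pes_lang P) n`! /\
    #|nfa_Q (enc_nfa P)| = 2 ^ n + 1 /\
    (forall A : nfa Sigma,
       (forall w, nfa_lang A w <-> pes_lang P w) -> 2 ^ n <= #|nfa_Q A|).
Proof.
move=> n _; exists 'I_n, (concurrent_pes 'I_n).
split; first by rewrite card_option card_ord.
split; first by have := concurrent_lang_card 'I_n; rewrite card_ord.
split; first by have := card_concurrent_states 'I_n; rewrite card_ord.
by move=> A /concurrent_nfa_card; rewrite card_ord.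
Qed.
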